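(* Let $n\ge5$ be odd and write $c_j=\cos(2\pi j/n)$. Then $$Su_4:=\frac32\sum_{j=\lceil n/4\rceil}^{(n-1)/2}\ \sum_{k=\lceil n/4\rceil}^{(n-1)/2}\frac{1}{|c_j-c_k+1|}\ \le\ \frac{3}{32}\,n^2\ln n.$$
   Context: $\ln$ denotes the natural logarithm. *)

From Stdlib Require Import Reals Lra Lia.
From Coquelicot Require Import Coquelicot.
Open Scope R_scope.

Definition cj (n j : nat) : R := cos (2 * PI * INR j / INR n).

Definition ceil4 (n : nat) : nat := Nat.div (n + 3) 4.

Definition Su4 (n : nat) : R :=
  3 / 2 * sum_n_m (fun j =>
            sum_n_m (fun k => / Rabs (cj n j - cj n k + 1))
                    (ceil4 n) (Nat.div (n - 1) 2))
          (ceil4 n) (Nat.div (n - 1) 2).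

From Stdlib Require Import Reals Lra Lia Psatz.
From Coquelicot Require Import Coquelicot.
Open Scope R_scope.

(* For ceil(n/4) <= j, k <= (n-1)/2 put alpha_j = pi (n - 2j)/n and
   beta_k = pi (4k - n)/(2n), both in (0, pi/2].  Then c_j = - cos alpha_j and
   c_k = - sin beta_k, so c_j - c_k + 1 = (1 - cos alpha_j) + sin beta_k > 0 and each
   summand is at most 1/sin beta_k <= 1/beta_k + 3 beta_k/10 and at most
   1/(1 - cos alpha_j) <= 2/alpha_j^2 + 0.22.  Summing the first bound along a row
   compares (2n/pi) sum_k 1/(4k - n) with a logarithm; this produces the n^2 ln n.
   For n = 4s + 3 the first column has beta = pi/(2n), so it is summed with the
   second bound instead (telescoping 2/p^2 <= 1/(p - 1) - 1/(p + 1)), the corner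
   j = (n-1)/2 being estimated separately.  The closed forms obtained are compared
   with (3/32) n^2 ln n using 3.14 <= pi <= 3.15; for n = 7, 11, 15, 19 the double
   sum is evaluated numerically from Taylor bounds. *)

Lemma sum_n_m_le_loc (f g : nat -> R) (a b : nat) :
  (forall k, (a <= k <= b)%nat -> f k <= g k) -> sum_n_m f a b <= sum_n_m g a b.
Proof.
  intros Hfg.
  rewrite (sum_n_m_ext_loc g (fun k => Rmax (f k) (g k))).
  - apply sum_n_m_le. intros k. apply Rmax_l.
  - intros k Hk. rewrite Rmax_right; [reflexivity|]. now apply Hfg.
Qed.

Lemma sum_n_m_telescope (G : nat -> R) (a b : nat) : (a <= S b)%nat ->
  sum_n_m (fun k => G (S k) - G k) a b = G (S b) - G a.
Proof.
  induction b as [|b IH]; intros Hab.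
  - destruct (Nat.eq_dec a 1) as [->|Ha].
    + rewrite sum_n_m_zero by lia. unfold zero; simpl; ring.
    + replace a with 0%nat by lia. now rewrite sum_n_n.
  - destruct (Nat.eq_dec a (S (S b))) as [->|Ha].
    + rewrite sum_n_m_zero by lia. unfold zero; simpl; ring.
    + rewrite sum_n_Sm, IH by lia. unfold plus; simpl; ring.
Qed.

Lemma sum_n_m_le_telescope (f G : nat -> R) (a b : nat) : (a <= S b)%nat ->
  (forall k, (a <= k <= b)%nat -> f k <= G (S k) - G k) ->
  sum_n_m f a b <= G (S b) - G a.
Proof.
  intros Hab Hf. rewrite <- sum_n_m_telescope by exact Hab.
  now apply sum_n_m_le_loc.
Qed.

Ltac eval_taylor H :=
  unfold cos_approx, cos_term, sin_approx, sin_term in H;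
  repeat rewrite INR_IZR_INZ in H; cbn in H.

Lemma cos_le_taylor4 (x : R) : -2 <= x <= 2 -> cos x <= 1 - x ^ 2 / 2 + x ^ 4 / 24.
Proof.
  intros Hx. destruct (pre_cos_bound x 0) as [_ H]; [lra|lra|]. eval_taylor H. lra.
Qed.

Lemma cos_ge_taylor6 (x : R) : -2 <= x <= 2 -> 1 - x ^ 2 / 2 + x ^ 4 / 24 - x ^ 6 / 720 <= cos x.
Proof.
  intros Hx. destruct (pre_cos_bound x 1) as [H _]; [lra|lra|]. eval_taylor H. lra.
Qed.

Lemma sin_ge_taylor3 (x : R) : 0 <= x <= 4 -> x - x ^ 3 / 6 <= sin x.
Proof.
  intros Hx. destruct (pre_sin_bound x 0) as [H _]; [lra|lra|]. eval_taylor H. lra.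
Qed.

Lemma PI_bounds : 3.14 <= PI <= 3.15.
Proof.
  split.
  - enough (1.57 < PI / 2) by lra.
    apply PI2_lower_bound; [lra|].
    replace 1.57 with (2 * 0.785) by lra. rewrite cos_2a_cos.
    assert (H := cos_ge_taylor6 0.785 ltac:(lra)). nra.
  - destruct (Rle_or_lt PI 3.15) as [h|h]; [exact h|exfalso].
    assert (Hc : 0 <= cos 1.575) by (apply cos_ge_0; lra).
    revert Hc. replace 1.575 with (2 * 0.7875) by lra. rewrite cos_2a_cos.
    assert (H := cos_le_taylor4 0.7875 ltac:(lra)).
    assert (0 <= cos 0.7875) by (apply cos_ge_0; lra). nra.
Qed.

Lemma exp_INR_mul (N : nat) (x : R) : exp (INR N * x) = exp x ^ N.
Proof.
  induction N as [|N IH]; [simpl; now rewrite Rmult_0_l, exp_0|].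
  rewrite S_INR, Rmult_plus_distr_r, Rmult_1_l, exp_plus, IH. simpl; ring.
Qed.

(* From exp x <= 1/(1 - x): exp c <= (1 - c/N)^-N. *)
Lemma ln_ge_of_pow (c y : R) (N : nat) : 0 <= c < INR N ->
  1 <= y * (1 - c / INR N) ^ N -> c <= ln y.
Proof.
  intros Hc Hy.
  set (x := c / INR N) in *.
  assert (Hx : 0 <= x < 1).
  { unfold x. split; [apply Rdiv_le_0_compat; lra|].
    apply Rmult_lt_reg_r with (INR N); [lra|]. field_simplify; lra. }
  assert (Hexp : exp x * (1 - x) <= 1).
  { assert (H := exp_ineq1_le (- x)).
    assert (exp x * exp (- x) = 1) by (rewrite <- exp_plus, Rplus_opp_r; apply exp_0).
    assert (0 < exp x) by apply exp_pos. nra. }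
  assert (Hpow : exp c * (1 - x) ^ N <= 1).
  { replace c with (INR N * x) by (unfold x; field; lra).
    rewrite exp_INR_mul, <- Rpow_mult_distr.
    apply Rle_trans with (1 ^ N); [|rewrite pow1; lra].
    apply pow_incr. split; [|exact Hexp].
    assert (0 < exp x) by apply exp_pos. nra. }
  assert (Hp : 0 < (1 - x) ^ N) by (apply pow_lt; lra).
  set (p := (1 - x) ^ N) in *.
  assert (Hle : exp c <= y) by nra.
  rewrite <- (ln_exp c). apply ln_le; [apply exp_pos|exact Hle].
Qed.

Lemma ln3_ge : 1 <= ln 3.
Proof. apply (ln_ge_of_pow _ _ 64); simpl; lra. Qed.
Lemma ln5_ge : 1.5 <= ln 5.
Proof. apply (ln_ge_of_pow _ _ 64); simpl; lra. Qed.
Lemma ln7_ge : 1.9 <= ln 7.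
Proof. apply (ln_ge_of_pow _ _ 64); simpl; lra. Qed.
Lemma ln23_ge : 2.9 <= ln 23.
Proof. apply (ln_ge_of_pow _ _ 64); simpl; lra. Qed.

Lemma ln_sub_ge (x y : R) : 0 < x < y -> (y - x) / y <= ln y - ln x.
Proof.
  intros Hxy.
  assert (H := exp_ineq1_le (ln (x / y))).
  rewrite exp_ln, ln_div in H by (try apply Rdiv_lt_0_compat; lra).
  replace ((y - x) / y) with (1 - x / y) by (field; lra). lra.
Qed.

Lemma Rinv_le_of_le_mul (e c : R) : 0 < e -> 1 <= c * e -> / e <= c.
Proof.
  intros He H. apply Rmult_le_reg_r with e; [exact He|].
  rewrite Rinv_l by lra. exact H.
Qed.

Lemma inv_sin_le (t : R) : 0 < t <= PI / 2 -> / sin t <= / t + 3 / 10 * t.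
Proof.
  intros Ht. assert (HP := PI_bounds).
  assert (Hs := sin_ge_taylor3 t ltac:(lra)).
  assert (Ht2 : t * t <= 2.49) by nra.
  apply Rle_trans with (/ (t - t ^ 3 / 6)); [apply Rinv_le_contravar; nra|].
  apply Rinv_le_of_le_mul; [nra|].
  replace ((/ t + 3 / 10 * t) * (t - t ^ 3 / 6))
    with (1 + t * t * (2 / 15 - t * t / 20)) by (field; lra).
  nra.
Qed.

Lemma inv_one_sub_cos_le (t : R) : 0 < t <= PI / 2 -> / (1 - cos t) <= 2 / t ^ 2 + 22 / 100.
Proof.
  intros Ht. assert (HP := PI_bounds).
  assert (Hc := cos_le_taylor4 t ltac:(lra)).
  assert (Ht2 : t * t <= 2.49) by nra.
  apply Rle_trans with (/ (t ^ 2 / 2 - t ^ 4 / 24)); [apply Rinv_le_contravar; nra|].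
  apply Rinv_le_of_le_mul; [nra|].
  replace ((2 / t ^ 2 + 22 / 100) * (t ^ 2 / 2 - t ^ 4 / 24))
    with (1 + t * t * (11 / 100 - 1 / 12 - 22 / 100 * t * t / 24)) by (field; lra).
  nra.
Qed.

Lemma inv_corner_le (v : R) : 0 < v <= 0.17 ->
  / ((1 - cos v) + sin (v / 2)) <= 2 / v - 1.9 + 2 * v.
Proof.
  intros Hv.
  assert (Hc := cos_le_taylor4 v ltac:(lra)).
  assert (Hs := sin_ge_taylor3 (v / 2) ltac:(lra)).
  apply Rle_trans with (/ (v ^ 2 / 2 - v ^ 4 / 24 + (v / 2 - (v / 2) ^ 3 / 6)));
    [apply Rinv_le_contravar; nra|].
  apply Rinv_le_of_le_mul; [nra|].
  replace ((2 / v - 1.9 + 2 * v) * (v ^ 2 / 2 - v ^ 4 / 24 + (v / 2 - (v / 2) ^ 3 / 6)))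
    with ((2 - 1.9 * v + 2 * v ^ 2) * (1 / 2 + v / 2 - v ^ 2 / 48 - v ^ 3 / 24))
    by (field; lra).
  nra.
Qed.

Definition alpha (n j : nat) : R := PI * (INR n - 2 * INR j) / INR n.
Definition beta (n k : nat) : R := PI * (4 * INR k - INR n) / (2 * INR n).
Definition admissible (n j : nat) : Prop := (n + 1 <= 4 * j /\ 2 * j + 1 <= n)%nat.
Definition summand (n j k : nat) : R := / Rabs (cj n j - cj n k + 1).

Lemma admissible_of_range (n j : nat) : Nat.odd n = true ->
  (ceil4 n <= j <= Nat.div (n - 1) 2)%nat -> admissible n j.
Proof.
  intros Hodd Hj. apply Nat.odd_spec in Hodd. destruct Hodd as [m ->].
  unfold ceil4 in Hj.
  replace (2 * m + 1 - 1)%nat with (m * 2)%nat in Hj by lia.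
  rewrite Nat.div_mul in Hj by lia.
  assert (E := Nat.div_mod_eq (2 * m + 1 + 3) 4).
  assert (B := Nat.mod_upper_bound (2 * m + 1 + 3) 4 ltac:(lia)).
  unfold admissible. lia.
Qed.

Lemma index_range_1mod4 (s : nat) :
  ceil4 (4 * s + 1) = S s /\ Nat.div (4 * s + 1 - 1) 2 = (2 * s)%nat.
Proof.
  unfold ceil4. split.
  - replace (4 * s + 1 + 3)%nat with (S s * 4)%nat by lia. apply Nat.div_mul; lia.
  - replace (4 * s + 1 - 1)%nat with (2 * s * 2)%nat by lia. apply Nat.div_mul; lia.
Qed.

Lemma index_range_3mod4 (s : nat) :
  ceil4 (4 * s + 3) = S s /\ Nat.div (4 * s + 3 - 1) 2 = S (2 * s).
Proof.
  unfold ceil4. split.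
  - replace (4 * s + 3 + 3)%nat with (2 + S s * 4)%nat by lia.
    rewrite Nat.div_add by lia. reflexivity.
  - replace (4 * s + 3 - 1)%nat with (S (2 * s) * 2)%nat by lia. apply Nat.div_mul; lia.
Qed.

Lemma admissible_INR (n j : nat) : admissible n j ->
  INR n + 1 <= 4 * INR j /\ 2 * INR j + 1 <= INR n.
Proof.
  intros [H1 H2]. apply le_INR in H1, H2. rewrite plus_INR, mult_INR in H1, H2.
  simpl in H1, H2. lra.
Qed.

Lemma cj_alpha (n j : nat) : (0 < n)%nat -> cj n j = - cos (alpha n j).
Proof.
  intros Hn. assert (0 < INR n) by (apply lt_0_INR; lia).
  unfold cj, alpha. rewrite <- Rtrigo_facts.cos_pi_minus. f_equal. field. lra.
Qed.

Lemma cj_beta (n k : nat) : (0 < n)%nat -> cj n k = - sin (beta n k).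
Proof.
  intros Hn. assert (0 < INR n) by (apply lt_0_INR; lia).
  unfold cj, beta. rewrite sin_cos, Ropp_involutive. f_equal. field. lra.
Qed.

Lemma alpha_range (n j : nat) : admissible n j -> PI / INR n <= alpha n j <= PI / 2.
Proof.
  intros Hj. destruct (admissible_INR n j Hj). assert (HP := PI_RGT_0).
  unfold alpha. split; apply Rmult_le_reg_r with (INR n); try lra;
    field_simplify; nra.
Qed.

Lemma beta_range (n k : nat) : admissible n k -> PI / (2 * INR n) <= beta n k <= PI / 2.
Proof.
  intros Hk. destruct (admissible_INR n k Hk). assert (HP := PI_RGT_0).
  unfold beta. split; apply Rmult_le_reg_r with (2 * INR n); try lra;
    field_simplify; nra.
Qed.

Lemma summand_eq (n j k : nat) : admissible n j -> admissible n k ->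
  0 <= 1 - cos (alpha n j) /\ 0 < sin (beta n k) /\
  summand n j k = / ((1 - cos (alpha n j)) + sin (beta n k)).
Proof.
  intros Hj Hk. destruct (admissible_INR n k Hk). destruct (beta_range n k Hk).
  assert (HP := PI_RGT_0).
  assert (0 < PI / (2 * INR n)) by (apply Rdiv_lt_0_compat; lra).
  assert (Hs : 0 < sin (beta n k)) by (apply sin_gt_0; lra).
  assert (Hc : 0 <= 1 - cos (alpha n j)) by (assert (h := COS_bound (alpha n j)); lra).
  unfold summand. rewrite cj_alpha, cj_beta by (destruct Hk; lia).
  rewrite Rabs_right by lra. repeat split; try lra. f_equal; ring.
Qed.

Lemma summand_le_beta (n j k : nat) : admissible n j -> admissible n k ->
  summand n j k <= / beta n k + 3 / 10 * beta n k.
Proof.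
  intros Hj Hk. destruct (summand_eq n j k Hj Hk) as (Hc & Hs & ->).
  destruct (admissible_INR n k Hk). destruct (beta_range n k Hk). assert (HP := PI_RGT_0).
  assert (0 < PI / (2 * INR n)) by (apply Rdiv_lt_0_compat; lra).
  apply Rle_trans with (/ sin (beta n k)); [apply Rinv_le_contravar; lra|].
  apply inv_sin_le; lra.
Qed.

Lemma summand_le_alpha (n j k : nat) : admissible n j -> admissible n k ->
  summand n j k <= 2 / alpha n j ^ 2 + 22 / 100.
Proof.
  intros Hj Hk. destruct (summand_eq n j k Hj Hk) as (Hc & Hs & ->).
  destruct (admissible_INR n j Hj). destruct (alpha_range n j Hj). assert (HP := PI_RGT_0).
  assert (0 < PI / INR n) by (apply Rdiv_lt_0_compat; lra).
  assert (0 < 1 - cos (alpha n j)).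
  { assert (cos (alpha n j) < 1); [|lra].
    rewrite <- cos_0. apply cos_decreasing_1; lra. }
  apply Rle_trans with (/ (1 - cos (alpha n j))); [apply Rinv_le_contravar; lra|].
  apply inv_one_sub_cos_le; lra.
Qed.

Lemma summand_corner_le (n j k : nat) : (19 <= n)%nat -> (2 * j + 1 = n)%nat -> (4 * k = n + 1)%nat ->
  summand n j k <= 2 / (PI / INR n) - 1.9 + 2 * (PI / INR n).
Proof.
  intros Hn Hj Hk.
  destruct (summand_eq n j k) as (_ & _ & ->); try (unfold admissible; lia).
  assert (HP := PI_bounds).
  assert (HN : 19 <= INR n) by (apply (le_INR 19) in Hn; simpl in Hn; lra).
  apply (f_equal INR) in Hj, Hk. rewrite plus_INR, mult_INR in Hj, Hk. simpl in Hj, Hk.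
  replace (alpha n j) with (PI / INR n) by (unfold alpha; field_simplify; [|lra..]; nra).
  replace (beta n k) with (PI / INR n / 2) by (unfold beta; field_simplify; [|lra..]; nra).
  apply inv_corner_le. split; [apply Rdiv_lt_0_compat; lra|].
  apply Rmult_le_reg_r with (INR n); [lra|]. field_simplify; lra.
Qed.

(* Computable: both angles are evaluated with 3.14 in place of pi. *)
Definition summand_taylor_bound (n j k : nat) : R :=
  let a := 314 / 100 * (INR n - 2 * INR j) / INR n in
  let b := 314 / 100 * (4 * INR k - INR n) / (2 * INR n) in
  / (a ^ 2 / 2 - a ^ 4 / 24 + (b - b ^ 3 / 6)).

Lemma summand_le_taylor_bound (n j k : nat) : admissible n j -> admissible n k ->
  summand n j k <= summand_taylor_bound n j k.
Proof.
  intros Hj Hk. destruct (summand_eq n j k Hj Hk) as (Hc & Hs & ->).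
  destruct (admissible_INR n j Hj), (admissible_INR n k Hk).
  destruct (alpha_range n j Hj), (beta_range n k Hk).
  assert (HP := PI_bounds).
  unfold summand_taylor_bound.
  set (a := 314 / 100 * (INR n - 2 * INR j) / INR n).
  set (b := 314 / 100 * (4 * INR k - INR n) / (2 * INR n)).
  assert (Ha : 0 <= a <= alpha n j).
  { unfold a, alpha. split; [apply Rdiv_le_0_compat; lra|].
    apply Rmult_le_compat_r; [left; apply Rinv_0_lt_compat; lra|nra]. }
  assert (Hb : 0 < b <= beta n k).
  { unfold b, beta. split; [apply Rdiv_lt_0_compat; lra|].
    apply Rmult_le_compat_r; [left; apply Rinv_0_lt_compat; lra|nra]. }
  set (s := alpha n j) in *. set (t := beta n k) in *.
  assert (Hcos := cos_le_taylor4 s ltac:(lra)).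
  assert (Hsin : sin b <= sin t) by (apply sin_incr_1; lra).
  assert (Hsb := sin_ge_taylor3 b ltac:(lra)).
  assert (s * s <= 2.49) by nra.
  assert (Hquart : a ^ 2 / 2 - a ^ 4 / 24 <= 1 - cos s).
  { assert (0 <= (s * s - a * a) * (1 / 2 - (s * s + a * a) / 24))
      by (apply Rmult_le_pos; nra).
    nra. }
  assert (0 <= a ^ 2 / 2 - a ^ 4 / 24).
  { assert (a * a <= 2.49) by nra. nra. }
  assert (0 < b - b ^ 3 / 6).
  { assert (b * b <= 2.49) by nra. nra. }
  apply Rinv_le_contravar; lra.
Qed.

Lemma sum_inv_beta_le (n a b : nat) : (0 < n)%nat -> (n + 1 <= 4 * a)%nat -> (a <= b)%nat ->
  sum_n_m (fun k => / beta n k) a b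
  <= 2 * INR n / (PI * (4 * INR a - INR n))
     + INR n / (2 * PI) * (ln (4 * INR b - INR n) - ln (4 * INR a - INR n)).
Proof.
  intros Hn Ha Hab.
  assert (HN : 0 < INR n) by (apply lt_0_INR; lia).
  assert (HA : INR n + 1 <= 4 * INR a).
  { apply le_INR in Ha. rewrite plus_INR, mult_INR in Ha. simpl in Ha. lra. }
  assert (HP := PI_RGT_0).
  (* The first term may have 4a - n = 1 or 3; from the second on, 4k - n >= 5 and
     4/q <= ln q - ln (q - 4) applies. *)
  set (G := fun k => INR n / (2 * PI) * ln (4 * INR k - INR n - 4)).
  assert (Htail : sum_n_m (fun k => / beta n k) (S a) b <= G (S b) - G (S a)).
  { apply sum_n_m_le_telescope; [lia|]. intros k Hk.
    assert (Hq : 5 <= 4 * INR k - INR n).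
    { assert (h : (S a <= k)%nat) by lia. apply le_INR in h. rewrite S_INR in h. lra. }
    unfold G, beta. rewrite S_INR.
    replace (4 * (INR k + 1) - INR n - 4) with (4 * INR k - INR n) by ring.
    set (q := 4 * INR k - INR n) in *.
    assert (Hln := ln_sub_ge (q - 4) q ltac:(lra)).
    replace (/ (PI * q / (2 * INR n))) with (INR n / (2 * PI) * ((q - (q - 4)) / q))
      by (field; lra).
    rewrite <- Rmult_minus_distr_l.
    apply Rmult_le_compat_l; [apply Rdiv_le_0_compat|]; lra. }
  rewrite sum_Sn_m by lia. unfold plus; simpl.
  unfold G in Htail. rewrite !S_INR in Htail.
  replace (4 * (INR b + 1) - INR n - 4) with (4 * INR b - INR n) in Htail by ring.
  replace (4 * (INR a + 1) - INR n - 4) with (4 * INR a - INR n) in Htail by ring.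
  replace (/ beta n a) with (2 * INR n / (PI * (4 * INR a - INR n)))
    by (unfold beta; field; lra).
  lra.
Qed.

Lemma sum_beta_le (n a b : nat) : (0 < n)%nat -> (a <= S b)%nat ->
  sum_n_m (fun k => beta n k) a b
  <= PI / (2 * INR n) * (INR b - INR a + 1) * (2 * INR a + 2 * INR b - INR n).
Proof.
  intros Hn Hab. assert (HN : 0 < INR n) by (apply lt_0_INR; lia).
  set (G := fun k => PI / (2 * INR n) * (2 * INR k ^ 2 - (INR n + 2) * INR k)).
  eapply Rle_trans; [apply (sum_n_m_le_telescope _ G); [exact Hab|]|].
  - intros k _. unfold G, beta. rewrite S_INR. right. field. lra.
  - assert (INR a <= INR b + 1) by (rewrite <- S_INR; apply le_INR; exact Hab).
    unfold G. rewrite S_INR. right. field. repeat split; lra.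
Qed.

Lemma row_sum_le (n j a b : nat) : admissible n j -> (n + 1 <= 4 * a)%nat ->
  (a <= b)%nat -> (2 * b + 1 <= n)%nat ->
  sum_n_m (fun k => summand n j k) a b
  <= 2 * INR n / (PI * (4 * INR a - INR n))
     + INR n / (2 * PI) * (ln (4 * INR b - INR n) - ln (4 * INR a - INR n))
     + 3 / 10 * (PI / (2 * INR n) * (INR b - INR a + 1) * (2 * INR a + 2 * INR b - INR n)).
Proof.
  intros Hj Ha Hab Hb.
  eapply Rle_trans.
  { apply (sum_n_m_le_loc _ (fun k => plus (/ beta n k) (3 / 10 * beta n k))).
    intros k Hk. apply summand_le_beta; [exact Hj|unfold admissible; lia]. }
  rewrite sum_n_m_plus. unfold plus; simpl.
  apply Rplus_le_compat; [apply sum_inv_beta_le; destruct Hj; lia|].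
  replace (sum_n_m (fun k => 3 / 10 * beta n k) a b)
    with (3 / 10 * sum_n_m (fun k => beta n k) a b)
    by (symmetry; exact (sum_n_m_mult_l (3 / 10) (fun k => beta n k) a b)).
  apply Rmult_le_compat_l; [lra|]. apply sum_beta_le; destruct Hj; lia.
Qed.

Lemma column_sum_le (n k a b : nat) : admissible n k -> (n + 1 <= 4 * a)%nat ->
  (a <= S b)%nat -> (2 * b + 3 <= n)%nat ->
  sum_n_m (fun j => summand n j k) a b
  <= INR n ^ 2 / PI ^ 2 * (/ (INR n - 2 * INR b - 1) - / (INR n - 2 * INR a + 1))
     + 22 / 100 * (INR b - INR a + 1).
Proof.
  intros Hk Ha Hab Hb.
  assert (HN : 0 < INR n) by (apply lt_0_INR; lia).
  assert (HB : 2 * INR b + 3 <= INR n).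
  { apply le_INR in Hb. rewrite plus_INR, mult_INR in Hb. simpl in Hb. lra. }
  assert (HP := PI_RGT_0).
  set (G := fun j => INR n ^ 2 / PI ^ 2 / (INR n - 2 * INR j + 1) + 22 / 100 * INR j).
  eapply Rle_trans; [apply (sum_n_m_le_telescope _ G); [exact Hab|]|].
  - intros j Hj. eapply Rle_trans; [apply summand_le_alpha; [unfold admissible; lia|exact Hk]|].
    assert (Hp : 3 <= INR n - 2 * INR j).
    { assert (h : (j <= b)%nat) by lia. apply le_INR in h. lra. }
    unfold G, alpha. rewrite S_INR.
    set (p := INR n - 2 * INR j) in *.
    replace (INR n - 2 * (INR j + 1) + 1) with (p - 1) by (unfold p; ring).
    replace (INR n - 2 * INR j + 1) with (p + 1) by (unfold p; ring).
    replace (2 / (PI * p / INR n) ^ 2) with (INR n ^ 2 / PI ^ 2 * (2 / p ^ 2))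
      by (field; lra).
    replace (INR n ^ 2 / PI ^ 2 / (p - 1) + 22 / 100 * (INR j + 1)
             - (INR n ^ 2 / PI ^ 2 / (p + 1) + 22 / 100 * INR j))
      with (INR n ^ 2 / PI ^ 2 * (2 / (p ^ 2 - 1)) + 22 / 100)
      by (field; repeat split; nra).
    apply Rplus_le_compat_r, Rmult_le_compat_l; [apply Rdiv_le_0_compat; nra|].
    apply Rmult_le_compat_l; [lra|]. apply Rinv_le_contravar; nra.
  - assert (INR a <= INR b + 1) by (rewrite <- S_INR; apply le_INR; exact Hab).
    unfold G. rewrite S_INR. right. field. repeat split; lra.
Qed.

Lemma bound_1mod4_arith (S D L P : R) :
  1 <= S -> 1.5 <= L -> D <= L - 1 -> 3.14 <= P <= 3.15 ->
  3 / 2 * (S * (2 * (4 * S + 1) / (3 * P) + (4 * S + 1) / (2 * P) * D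
                + 3 / 10 * (P / (2 * (4 * S + 1)) * S * (2 * S + 1))))
  <= 3 / 32 * (4 * S + 1) ^ 2 * L.
Proof.
  intros HS HL HD HP.
  set (N := 4 * S + 1).
  assert (HN : 5 <= N) by (unfold N; lra).
  assert (Hlog : 2 * N / (3 * P) + N / (2 * P) * D
                 <= N * (100 / 314) * (2 / 3 + (L - 1) / 2)).
  { apply Rle_trans with (2 * N / (3 * P) + N / (2 * P) * (L - 1)).
    { apply Rplus_le_compat_l, Rmult_le_compat_l; [apply Rdiv_le_0_compat|]; lra. }
    replace (2 * N / (3 * P) + N / (2 * P) * (L - 1))
      with (N * / P * (2 / 3 + (L - 1) / 2)) by (field; lra).
    apply Rmult_le_compat_r; [lra|]. apply Rmult_le_compat_l; [lra|].
    replace (100 / 314) with (/ (314 / 100)) by field.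
    apply Rinv_le_contravar; lra. }
  assert (Hpoly : 3 / 10 * (P / (2 * N) * S * (2 * S + 1)) <= 3 / 20 * 3.15 * (2 * S + 1) / 4).
  { replace (3 / 10 * (P / (2 * N) * S * (2 * S + 1)))
      with (3 / 20 * P * (S / N) * (2 * S + 1)) by (field; lra).
    assert (S / N <= 1 / 4).
    { apply Rmult_le_reg_r with N; [lra|]. unfold N. field_simplify; lra. }
    assert (0 <= S / N) by (apply Rdiv_le_0_compat; lra).
    assert (P * (S / N) <= 3.15 * (1 / 4)) by (apply Rmult_le_compat; lra).
    nra. }
  apply Rle_trans with (3 / 2 * (S * (N * (100 / 314) * (2 / 3 + (L - 1) / 2)
                                      + 3 / 20 * 3.15 * (2 * S + 1) / 4))).
  { apply Rmult_le_compat_l; [lra|]. apply Rmult_le_compat_l; lra. }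
  unfold N. nra.
Qed.

Lemma Su4_1mod4_le (s : nat) : (1 <= s)%nat ->
  Su4 (4 * s + 1)
  <= 3 / 2 * (INR s
     * (2 * (4 * INR s + 1) / (3 * PI)
        + (4 * INR s + 1) / (2 * PI) * (ln (4 * INR s - 1) - ln 3)
        + 3 / 10 * (PI / (2 * (4 * INR s + 1)) * INR s * (2 * INR s + 1)))).
Proof.
  intros Hs. unfold Su4. destruct (index_range_1mod4 s) as [-> ->].
  set (n := (4 * s + 1)%nat).
  apply Rmult_le_compat_l; [lra|].
  eapply Rle_trans.
  { apply sum_n_m_le_loc. intros j Hj.
    apply (row_sum_le n j (S s) (2 * s)); unfold admissible, n; lia. }
  rewrite sum_n_m_const. replace (S (2 * s) - S s)%nat with s by lia.
  assert (HN : INR n = 4 * INR s + 1) by (unfold n; rewrite plus_INR, mult_INR; simpl; ring).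
  rewrite HN, S_INR, mult_INR. replace (INR 2) with 2 by (simpl; ring).
  replace (4 * (INR s + 1) - (4 * INR s + 1)) with 3 by ring.
  replace (4 * (2 * INR s) - (4 * INR s + 1)) with (4 * INR s - 1) by ring.
  assert (HP := PI_RGT_0). assert (0 <= INR s) by apply pos_INR.
  right. field. split; lra.
Qed.

Lemma Su4_1mod4 (s : nat) : (1 <= s)%nat ->
  Su4 (4 * s + 1) <= 3 / 32 * INR (4 * s + 1) ^ 2 * ln (INR (4 * s + 1)).
Proof.
  intros Hs.
  assert (HS : 1 <= INR s) by (apply (le_INR 1) in Hs; exact Hs).
  replace (INR (4 * s + 1)) with (4 * INR s + 1) by (rewrite plus_INR, mult_INR; simpl; ring).
  eapply Rle_trans; [apply Su4_1mod4_le, Hs|].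
  assert (H5 : 1.5 <= ln (4 * INR s + 1)).
  { apply Rle_trans with (ln 5); [apply ln5_ge|apply ln_le; lra]. }
  apply bound_1mod4_arith; try lra; [|apply PI_bounds].
  assert (ln (4 * INR s - 1) <= ln (4 * INR s + 1)) by (apply ln_le; lra).
  assert (H3 := ln3_ge). lra.
Qed.

Lemma poly_3mod4_arith (S L : R) : 5 <= S -> 2.9 <= L ->
  3 / 2 * ((4 * S + 3) * (2 + (S + 1) * (2 / 5 + (L - 1.5) / 2)) * (100 / 314)
           + (4 * S + 3) ^ 2 * S / (2 * S + 2) * (100 / 314) ^ 2
           + 3.15 * ((2 + (S + 1) * (3 * S * (2 * S + 3) / 20)) / (4 * S + 3))
           - 1.9 + 22 / 100 * S)
  <= 3 / 32 * (4 * S + 3) ^ 2 * L.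
Proof.
  intros HS HL.
  assert (K1 : (4 * S + 3) ^ 2 * S / (2 * S + 2) <= (4 * S + 3) ^ 2 / 2 - (8 * S + 4)).
  { apply Rmult_le_reg_r with (2 * S + 2); [lra|]. field_simplify; [|lra]. nra. }
  assert (K2 : (2 + (S + 1) * (3 * S * (2 * S + 3) / 20)) / (4 * S + 3)
               <= 3 / 40 * S ^ 2 + 14 / 100 * S + 1 / 10).
  { apply Rmult_le_reg_r with (4 * S + 3); [lra|]. field_simplify; [|lra]. nra. }
  assert (K3 : 0 <= (L - 2.9) * ((4 * S + 3) * (3 / 32 * (4 * S + 3) - 3 / 4 * (S + 1) * (100 / 314)))).
  { apply Rmult_le_pos; [lra|]. apply Rmult_le_pos; lra. }
  assert (K4 : 0 <= (S - 5) * (S - 5) * (S - 5)) by (apply Rmult_le_pos; [apply Rmult_le_pos|]; lra).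
  assert (K5 : 0 <= (S - 5) * (S - 5)) by (apply Rmult_le_pos; lra).
  nra.
Qed.

Lemma bound_3mod4_arith (S D L P : R) :
  5 <= S -> 2.9 <= L -> D <= L - 1.5 -> 3.14 <= P <= 3.15 ->
  3 / 2 * ((4 * S + 3) ^ 2 / P ^ 2 * (/ 2 - / (2 * S + 2)) + 22 / 100 * S
           + (2 / (P / (4 * S + 3)) - 1.9 + 2 * (P / (4 * S + 3)))
           + (S + 1) * (2 * (4 * S + 3) / (P * 5) + (4 * S + 3) / (2 * P) * D
                        + 3 / 10 * (P / (2 * (4 * S + 3)) * S * (2 * S + 3))))
  <= 3 / 32 * (4 * S + 3) ^ 2 * L.
Proof.
  intros HS HL HD HP.
  set (N := 4 * S + 3).
  assert (HN : 23 <= N) by (unfold N; lra).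
  assert (HD' : (S + 1) * (N / (2 * P) * D) <= (S + 1) * (N / (2 * P) * (L - 1.5))).
  { apply Rmult_le_compat_l; [lra|]. apply Rmult_le_compat_l; [apply Rdiv_le_0_compat|]; lra. }
  set (c1 := N * (2 + (S + 1) * (2 / 5 + (L - 1.5) / 2))).
  set (c2 := N ^ 2 * S / (2 * S + 2)).
  set (c3 := (2 + (S + 1) * (3 * S * (2 * S + 3) / 20)) / N).
  assert (Hexpand :
    (N ^ 2 / P ^ 2 * (/ 2 - / (2 * S + 2)) + 22 / 100 * S + (2 / (P / N) - 1.9 + 2 * (P / N))
     + (S + 1) * (2 * N / (P * 5) + N / (2 * P) * (L - 1.5) + 3 / 10 * (P / (2 * N) * S * (2 * S + 3))))
    = c1 * / P + c2 * (/ P) ^ 2 + P * c3 - 1.9 + 22 / 100 * S).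
  { unfold c1, c2, c3. field. repeat split; lra. }
  assert (Hinv : 0 < / P <= 100 / 314).
  { split; [apply Rinv_0_lt_compat; lra|].
    replace (100 / 314) with (/ (314 / 100)) by field. apply Rinv_le_contravar; lra. }
  assert (c1 * / P <= c1 * (100 / 314)).
  { apply Rmult_le_compat_l; [unfold c1; apply Rmult_le_pos; nra|lra]. }
  assert (c2 * (/ P) ^ 2 <= c2 * (100 / 314) ^ 2).
  { apply Rmult_le_compat_l; [unfold c2; apply Rdiv_le_0_compat; nra|].
    apply pow_incr; lra. }
  assert (P * c3 <= 3.15 * c3).
  { apply Rmult_le_compat_r; [unfold c3; apply Rdiv_le_0_compat; nra|lra]. }
  assert (Hpoly := poly_3mod4_arith S L HS HL). fold N c1 c2 c3 in Hpoly.
  lra.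
Qed.

Lemma Su4_3mod4_le (s : nat) : (5 <= s)%nat ->
  Su4 (4 * s + 3)
  <= 3 / 2 * ((4 * INR s + 3) ^ 2 / PI ^ 2 * (/ 2 - / (2 * INR s + 2)) + 22 / 100 * INR s
              + (2 / (PI / (4 * INR s + 3)) - 1.9 + 2 * (PI / (4 * INR s + 3)))
              + (INR s + 1) * (2 * (4 * INR s + 3) / (PI * 5)
                               + (4 * INR s + 3) / (2 * PI) * (ln (4 * INR s + 1) - ln 5)
                               + 3 / 10 * (PI / (2 * (4 * INR s + 3)) * INR s * (2 * INR s + 3)))).
Proof.
  intros Hs. unfold Su4. destruct (index_range_3mod4 s) as [-> ->].
  set (n := (4 * s + 3)%nat).
  apply Rmult_le_compat_l; [lra|].
  set (row := 2 * INR n / (PI * (4 * INR (S (S s)) - INR n))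
     + INR n / (2 * PI) * (ln (4 * INR (S (2 * s)) - INR n) - ln (4 * INR (S (S s)) - INR n))
     + 3 / 10 * (PI / (2 * INR n) * (INR (S (2 * s)) - INR (S (S s)) + 1)
                 * (2 * INR (S (S s)) + 2 * INR (S (2 * s)) - INR n))).
  eapply Rle_trans.
  { apply (sum_n_m_le_loc _ (fun j => summand n j (S s) + row)). intros j Hj.
    rewrite sum_Sn_m by lia. unfold plus; simpl.
    apply Rplus_le_compat_l, row_sum_le; unfold admissible, n; lia. }
  rewrite (sum_n_m_plus (fun j => summand n j (S s)) (fun _ => row)), sum_n_m_const.
  rewrite sum_n_Sm by lia. change (plus ?x ?y) with (x + y).
  replace (S (S (2 * s)) - S s)%nat with (S s) by lia.
  assert (Hcol := column_sum_le n (S s) (S s) (2 * s) ltac:(unfold admissible, n; lia)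
                    ltac:(unfold n; lia) ltac:(lia) ltac:(unfold n; lia)).
  assert (Hcorner := summand_corner_le n (S (2 * s)) (S s) ltac:(unfold n; lia)
                       ltac:(unfold n; lia) ltac:(unfold n; lia)).
  assert (HP := PI_RGT_0). assert (0 <= INR s) by apply pos_INR.
  assert (HN : INR n = 4 * INR s + 3) by (unfold n; rewrite plus_INR, mult_INR; simpl; ring).
  unfold row in *. rewrite HN in *. rewrite !S_INR, !mult_INR in *.
  replace (INR 2) with 2 in * by (simpl; ring).
  replace (4 * (2 * INR s + 1) - (4 * INR s + 3)) with (4 * INR s + 1) by ring.
  replace (4 * (INR s + 1 + 1) - (4 * INR s + 3)) with 5 by ring.
  apply Rplus_le_compat; [apply Rplus_le_compat|].
  - eapply Rle_trans; [exact Hcol|]. right. field. split; lra.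
  - exact Hcorner.
  - right. field. split; lra.
Qed.

Lemma Su4_3mod4 (s : nat) : (5 <= s)%nat ->
  Su4 (4 * s + 3) <= 3 / 32 * INR (4 * s + 3) ^ 2 * ln (INR (4 * s + 3)).
Proof.
  intros Hs.
  assert (HS : 5 <= INR s) by (apply (le_INR 5) in Hs; simpl in Hs; lra).
  replace (INR (4 * s + 3)) with (4 * INR s + 3) by (rewrite plus_INR, mult_INR; simpl; ring).
  eapply Rle_trans; [apply Su4_3mod4_le, Hs|].
  assert (H23 : 2.9 <= ln (4 * INR s + 3)).
  { apply Rle_trans with (ln 23); [apply ln23_ge|apply ln_le; lra]. }
  apply bound_3mod4_arith; try lra; [|apply PI_bounds].
  assert (ln (4 * INR s + 1) <= ln (4 * INR s + 3)) by (apply ln_le; lra).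
  assert (H5 := ln5_ge). lra.
Qed.

Lemma Su4_le_taylor (n : nat) : Nat.odd n = true ->
  Su4 n <= 3 / 2 * sum_n_m (fun j => sum_n_m (fun k => summand_taylor_bound n j k)
                                     (ceil4 n) (Nat.div (n - 1) 2))
                           (ceil4 n) (Nat.div (n - 1) 2).
Proof.
  intros Hodd. unfold Su4. apply Rmult_le_compat_l; [lra|].
  apply sum_n_m_le_loc. intros j Hj. apply sum_n_m_le_loc. intros k Hk.
  apply summand_le_taylor_bound; now apply admissible_of_range.
Qed.

Lemma Su4_small (n : nat) : (n = 7 \/ n = 11 \/ n = 15 \/ n = 19)%nat ->
  Su4 n <= 3 / 32 * INR n ^ 2 * ln (INR n).
Proof.
  intros Hn.
  assert (Hodd : Nat.odd n = true) by (destruct Hn as [-> | [-> | [-> | ->]]]; reflexivity).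
  assert (Hln : 1.9 <= ln (INR n)).
  { apply Rle_trans with (ln 7); [apply ln7_ge|apply ln_le; [lra|]].
    destruct Hn as [-> | [-> | [-> | ->]]]; simpl; lra. }
  eapply Rle_trans; [apply Su4_le_taylor, Hodd|].
  destruct Hn as [-> | [-> | [-> | ->]]]; revert Hln;
    cbv [ceil4 Nat.div Nat.sub Nat.add Nat.divmod fst];
    repeat (first [rewrite sum_n_n | rewrite sum_Sn_m by lia]);
    unfold plus, summand_taylor_bound; simpl; intros; lra.
Qed.

Theorem mainTheorem6 (n : nat) (Hn : (5 <= n)%nat) (Hodd : Nat.odd n = true) :
  Su4 n <= 3 / 32 * (INR n) ^ 2 * ln (INR n).
Proof.
  apply Nat.odd_spec in Hodd. destruct Hodd as [m ->].
  destruct (Nat.Even_or_Odd m) as [[s ->] | [s ->]].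
  - replace (2 * (2 * s) + 1)%nat with (4 * s + 1)%nat by lia. apply Su4_1mod4. lia.
  - replace (2 * (2 * s + 1) + 1)%nat with (4 * s + 3)%nat by lia.
    destruct (Compare_dec.le_lt_dec 5 s) as [Hs | Hs]; [now apply Su4_3mod4|].
    apply Su4_small. lia.
Qed.
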